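(* Let $T=0$, let $\epsilon>0$ be admissible, and let $\mathbf X^{(\epsilon)}(t)=(X_0(t),\dots,X_{n_\epsilon-1}(t))$ be the continuous-time Markov chain on $\mathbb N^{n_\epsilon}$ defined in the context. If $$\lambda<\frac{C}{L\ln(2)\int_{\mathbf S} l_\epsilon(x,0)\,dx}=\frac{C}{L\ln(2)\,\epsilon^2\sum_{k=0}^{n_\epsilon-1}l_\epsilon(a_k,0)},$$ then $\mathbf X^{(\epsilon)}(t)$ is ergodic (positive recurrent).
   Context: Setting ($T=0$). $\mathbf S=[-Q,Q]^2$ with opposite edges identified (flat torus), torus distance $\|\cdot\|$. Path-loss $l:[0,\infty)\to[0,\infty)$ bounded, non-increasing, $l(0)=1$; noise $\mathcal N_0>0$; constants $C>0$, $L>0$, $\lambda>0$. Discretization: $\epsilon>0$ is admissible if $2Q/\epsilon$ is an integer; tessellate $\mathbf S$ into $n_\epsilon=(2Q/\epsilon)^2$ squares $A_0,\dots,A_{n_\epsilon-1}$ of side $\epsilon$ with centers $a_i$ and $a_0=0$. Define $l_\epsilon(a_i,a_j)=\sup\{l(\|b-b'\|): b\in\overline{A_i},\,b'\in\overline{A_j}\}$ and, for $x\in A_i$, $y\in A_j$, $l_\epsilon(x,y)=l_\epsilon(a_i,a_j)$. The chain $\mathbf X^{(\epsilon)}$ on $\mathbb N^{n_\epsilon}$ (the cell-count process of the discretized birth–death dynamics) has transitions: for each $i$, $X_i\to X_i+1$ at rate $\lambda\epsilon^2$, and $X_i\to X_i-1$ at rate $\frac{C}{L}X_i\log_2\!\Big(1+\frac{1}{\mathcal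 N_0+\sum_{j=0}^{n_\epsilon-1}(X_j-\mathbf 1\{j=i\})\,l_\epsilon(a_i,a_j)}\Big)$. *)

From Stdlib Require Import Reals Lra List Arith ZArith.
Import ListNotations.
Open Scope R_scope.

(* distance from t to the nearest point of 2Q*Z, i.e. min_{k in Z} |t - 2Qk| *)
Definition circ_dist (Q t : R) : R :=
  let r := t / (2 * Q) - IZR (Int_part (t / (2 * Q))) in
  2 * Q * Rmin r (1 - r).

Definition torus_dist (Q : R) (x y : R * R) : R :=
  sqrt (circ_dist Q (fst x - fst y) ^ 2 + circ_dist Q (snd x - snd y) ^ 2).

(* Tessellation: m = 2Q/eps squares per side, n_eps = m*m cells.
   Cell i (i < m*m) has center a_i = ((i / m) eps, (i mod m) eps) (mod 2Q),
   so a_0 = 0. *)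
Definition center (eps : R) (m i : nat) : R * R :=
  (INR (i / m)%nat * eps, INR (i mod m)%nat * eps).

Definition in_closed_cell (eps : R) (m i : nat) (b : R * R) : Prop :=
  exists u v, Rabs u <= eps / 2 /\ Rabs v <= eps / 2 /\
    b = (fst (center eps m i) + u, snd (center eps m i) + v).

(* the set { l(||b-b'||) : b in cl A_i, b' in cl A_j }; l_eps(a_i,a_j) is its sup *)
Definition leps_set (l : R -> R) (Q eps : R) (m i j : nat) (r : R) : Prop :=
  exists b b', in_closed_cell eps m i b /\ in_closed_cell eps m j b' /\
    r = l (torus_dist Q b b').

(** * The Markov chain X^(eps) on N^{n_eps} (states = lists of length n) *)

Definition state := list nat.

Fixpoint upd (f : nat -> nat) (i : nat) (s : state) : state :=
  match s, i with
  | [], _ => []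
  | x :: t, O => f x :: t
  | x :: t, S i' => x :: upd f i' t
  end.

Definition rsum (f : nat -> R) (n : nat) : R := fold_right Rplus 0 (map f (seq 0 n)).

Definition log2 (x : R) : R := ln x / ln 2.

Definition interf (le : nat -> nat -> R) (n i : nat) (s : state) : R :=
  rsum (fun j => (INR (nth j s O) - (if Nat.eqb j i then 1 else 0)) * le i j) n.

Definition death_rate (C L N0 : R) (le : nat -> nat -> R) (n i : nat) (s : state) : R :=
  C / L * INR (nth i s O) * log2 (1 + 1 / (N0 + interf le n i s)).

(* list of (rate, target) transitions out of s: births X_i -> X_i+1 at rate
   lam eps^2, deaths X_i -> X_i-1 at the death rate (which is 0 when X_i = 0) *)
Definition moves (lam eps C L N0 : R) (le : nat -> nat -> R) (n : nat) (s : state)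
  : list (R * state) :=
  flat_map (fun i => [(lam * eps ^ 2, upd S i s);
                      (death_rate C L N0 le n i s, upd Nat.pred i s)]) (seq 0 n).

Definition qtot (mv : state -> list (R * state)) (s : state) : R :=
  fold_right (fun p a => fst p + a) 0 (mv s).

Definition state_eqb (x y : state) : bool :=
  if list_eq_dec Nat.eq_dec x y then true else false.

(* P_y(first hitting time of x, counted in jumps, = k) *)
Fixpoint hit_prob (mv : state -> list (R * state)) (x : state) (k : nat) (y : state) : R :=
  match k with
  | O => if state_eqb y x then 1 else 0
  | S k' => if state_eqb y x then 0 else
      fold_right (fun p a => fst p / qtot mv y * hit_prob mv x k' (snd p) + a) 0 (mv y)
  end.

(* E_y[ tau_x ; jumps to hit x = k ]  where tau_x is the continuous hitting time *)
Fixpoint hit_time (mv : state -> list (R * state)) (x : state) (k : nat) (y : state) : R :=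
  match k with
  | O => 0
  | S k' => if state_eqb y x then 0 else
      fold_right (fun p a => fst p / qtot mv y *
        (hit_time mv x k' (snd p) + hit_prob mv x k' (snd p) / qtot mv y) + a) 0 (mv y)
  end.

(* P_x(first return to x happens at jump k) *)
Definition ret_prob (mv : state -> list (R * state)) (x : state) (k : nat) : R :=
  match k with
  | O => 0
  | S k' => fold_right (fun p a => fst p / qtot mv x * hit_prob mv x k' (snd p) + a) 0 (mv x)
  end.

(* E_x[ return time tau_x^+ ; return at jump k ] *)
Definition ret_time (mv : state -> list (R * state)) (x : state) (k : nat) : R :=
  match k with
  | O => 0
  | S k' => fold_right (fun p a => fst p / qtot mv x *
        (hit_time mv x k' (snd p) + hit_prob mv x k' (snd p) / qtot mv x) + a) 0 (mv x)
  end.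

Inductive reach (mv : state -> list (R * state)) : state -> state -> Prop :=
  | reach_refl x : reach mv x x
  | reach_step x z y r : In (r, z) (mv x) -> 0 < r -> reach mv z y -> reach mv x y.

Definition irreducible (mv : state -> list (R * state)) (n : nat) : Prop :=
  forall x y, length x = n -> length y = n -> reach mv x y.

Definition positive_recurrent (mv : state -> list (R * state)) (n : nat) : Prop :=
  forall x, length x = n ->
    infinite_sum (ret_prob mv x) 1 /\ exists T, infinite_sum (ret_time mv x) T.

Definition ergodic (mv : state -> list (R * state)) (n : nat) : Prop :=
  irreducible mv n /\ positive_recurrent mv n.

From Stdlib Require Import Reals Lra Lia List Permutation.
Import ListNotations.
Open Scope R_scope.

(* Foster-Lyapunov argument. Let [A_i = sum_j l_eps(a_i,a_j) X_j] ([load]) be the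
   interference at cell [i], the cell's own users included, and [V = sum_i X_i A_i]
   ([energy]). A birth in cell [i] raises [V] by [2 A_i + 1] at rate [lam eps^2]; a death
   lowers it by [2 A_i - 1] at rate at least [C/(L ln 2) * X_i / (N0 + A_i)], since
   [ln (1 + u) >= u / (1 + u)]. On the torus every row of the kernel sums to
   [S = sum_k l_eps(a_k,0)], so the generator applied to [V] is at most
   [2 (lam eps^2 S - C/(L ln 2)) sum_i X_i + const]: under the stability condition it is
   negative off a finite set of states. From that finite set any state is reached within
   boundedly many jumps (deaths down to the empty network, then births) with uniformly
   positive probability, which turns [V] into a Lyapunov function with drift at most [-1]
   for the jump chain killed at the target, whence finite expected return times. *)

Definition lsum (g : R * state -> R) (l : list (R * state)) : R :=
  fold_right (fun p a => g p + a) 0 l.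

Lemma lsum_plus f g l : lsum (fun p => f p + g p) l = lsum f l + lsum g l.
Proof. induction l as [|p l IH]; simpl; [lra|]. unfold lsum in *; simpl; rewrite IH; lra. Qed.

Lemma lsum_scal c f l : lsum (fun p => c * f p) l = c * lsum f l.
Proof. induction l as [|p l IH]; unfold lsum in *; simpl; [lra|]. rewrite IH; lra. Qed.

Lemma lsum_le f g l : (forall p, In p l -> f p <= g p) -> lsum f l <= lsum g l.
Proof.
  induction l as [|p l IH]; intros H; unfold lsum in *; simpl; [lra|].
  assert (f p <= g p) by (apply H; left; auto).
  assert (fold_right (fun p a => f p + a) 0 l <= fold_right (fun p a => g p + a) 0 l)
    by (apply IH; intros; apply H; right; auto).
  lra.
Qed.

Lemma lsum_ext f g l : (forall p, In p l -> f p = g p) -> lsum f l = lsum g l.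
Proof. intros H; apply Rle_antisym; apply lsum_le; intros p Hp; rewrite (H p Hp); lra. Qed.

Lemma lsum_app g l1 l2 : lsum g (l1 ++ l2) = lsum g l1 + lsum g l2.
Proof. induction l1 as [|p l IH]; unfold lsum in *; simpl; [lra|]. rewrite IH; lra. Qed.

Lemma lsum_flat_map {A} g (h : A -> list (R * state)) l :
  lsum g (flat_map h l) = fold_right Rplus 0 (map (fun i => lsum g (h i)) l).
Proof. induction l as [|a l IH]; simpl; [reflexivity|]. rewrite lsum_app, IH; reflexivity. Qed.

Lemma sum_f_R0_lsum (f : nat -> R * state -> R) l K :
  sum_f_R0 (fun k => lsum (f k) l) K = lsum (fun p => sum_f_R0 (fun k => f k p) K) l.
Proof.
  induction l as [|p l IH]; unfold lsum in *; simpl.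
  - rewrite sum_cte; lra.
  - rewrite sum_plus, IH; reflexivity.
Qed.

Lemma lsum_le_drop c f l a :
  In a l -> (forall p, In p l -> 0 <= c p) -> (forall p, In p l -> f p <= 1) ->
  lsum (fun p => c p * f p) l <= lsum c l - c a * (1 - f a).
Proof.
  induction l as [|b l IH]; intros Ha Hc Hf; [destruct Ha|].
  change (lsum ?g (b :: l)) with (g b + lsum g l).
  assert (Hb : 0 <= c b /\ f b <= 1) by (split; [apply Hc|apply Hf]; now left).
  assert (Hl : lsum (fun p => c p * f p) l <= lsum c l).
  { apply lsum_le. intros p Hp.
    assert (0 <= c p) by (apply Hc; now right). assert (f p <= 1) by (apply Hf; now right). nra. }
  destruct Ha as [<-|Ha]; [nra|].
  pose proof (IH Ha (fun p Hp => Hc p (or_intror Hp)) (fun p Hp => Hf p (or_intror Hp))). nra.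
Qed.

Lemma sum_f_R0_succ_l f K : sum_f_R0 f (S K) = f 0%nat + sum_f_R0 (fun k => f (S k)) K.
Proof. apply (decomp_sum f (S K)); lia. Qed.

Lemma Un_cv_of_dist_le (u : nat -> R) l c :
  (forall k, R_dist (u (S k)) l <= c / INR (S (S k))) -> Un_cv u l.
Proof.
  intros H e He.
  destruct (archimed_cor1 (e / (Rabs c + 1))) as [N [HN HN0]].
  { apply Rdiv_lt_0_compat; [lra|]. pose proof (Rabs_pos c); lra. }
  exists N. intros [|k] Hk; [lia|].
  assert (HNk : INR N <= INR (S (S k))) by (apply le_INR; lia).
  assert (HN' : 0 < INR N) by (apply lt_0_INR; lia).
  assert (Hc := Rle_abs c).
  apply Rle_lt_trans with ((Rabs c + 1) * / INR N); [eapply Rle_trans; [apply H|]|].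
  - assert (Hi : 0 < / INR (S (S k))) by (apply Rinv_0_lt_compat; lra).
    apply Rle_trans with ((Rabs c + 1) * / INR (S (S k))).
    + unfold Rdiv. apply Rmult_le_compat_r; lra.
    + apply Rmult_le_compat_l; [pose proof (Rabs_pos c); lra|].
      apply Rinv_le_contravar; lra.
  - apply Rmult_lt_reg_r with (/ (Rabs c + 1)).
    + apply Rinv_0_lt_compat. pose proof (Rabs_pos c); lra.
    + replace ((Rabs c + 1) * / INR N * / (Rabs c + 1)) with (/ INR N)
        by (field; pose proof (Rabs_pos c); lra).
      exact HN.
Qed.

Lemma state_eqb_refl s : state_eqb s s = true.
Proof. unfold state_eqb. destruct (list_eq_dec Nat.eq_dec s s); congruence. Qed.

Lemma state_eqb_false s s' : state_eqb s s' = false -> s <> s'.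
Proof. unfold state_eqb. destruct (list_eq_dec Nat.eq_dec s s'); congruence. Qed.

Lemma state_eqb_neq s s' : s <> s' -> state_eqb s s' = false.
Proof. unfold state_eqb. destruct (list_eq_dec Nat.eq_dec s s'); congruence. Qed.

Section JumpChain.

Variable mv : state -> list (R * state).
Hypothesis rate_nonneg : forall s p, In p (mv s) -> 0 <= fst p.
Hypothesis qtot_pos : forall s, 0 < qtot mv s.

Definition jump_mean (h : state -> R) (y : state) : R :=
  lsum (fun p => fst p / qtot mv y * h (snd p)) (mv y).

Lemma jump_prob_nonneg y p : In p (mv y) -> 0 <= fst p / qtot mv y.
Proof.
  intros Hp. apply Rmult_le_pos; [exact (rate_nonneg y p Hp)|].
  apply Rlt_le, Rinv_0_lt_compat, qtot_pos.
Qed.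

Lemma jump_mean_const c y : jump_mean (fun _ => c) y = c.
Proof.
  unfold jump_mean.
  rewrite (lsum_ext _ (fun p => c / qtot mv y * fst p)) by (intros; unfold Rdiv; lra).
  rewrite lsum_scal. change (lsum fst (mv y)) with (qtot mv y).
  field. apply Rgt_not_eq, qtot_pos.
Qed.

Lemma lsum_jump_prob y : lsum (fun p => fst p / qtot mv y) (mv y) = 1.
Proof.
  rewrite <- (jump_mean_const 1 y). apply lsum_ext. intros; lra.
Qed.

Lemma jump_mean_mono f g y :
  (forall p, In p (mv y) -> f (snd p) <= g (snd p)) -> jump_mean f y <= jump_mean g y.
Proof.
  intros H. apply lsum_le. intros p Hp.
  apply Rmult_le_compat_l; [apply jump_prob_nonneg|]; auto.
Qed.

Lemma jump_mean_nonneg f y : (forall p, In p (mv y) -> 0 <= f (snd p)) -> 0 <= jump_mean f y.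
Proof. intros H. rewrite <- (jump_mean_const 0 y). now apply jump_mean_mono. Qed.

Lemma jump_mean_plus f g y : jump_mean (fun z => f z + g z) y = jump_mean f y + jump_mean g y.
Proof.
  unfold jump_mean. rewrite <- lsum_plus. apply lsum_ext. intros; lra.
Qed.

Lemma jump_mean_scal c f y : jump_mean (fun z => c * f z) y = c * jump_mean f y.
Proof.
  unfold jump_mean. rewrite <- lsum_scal. apply lsum_ext. intros; lra.
Qed.

Lemma jump_mean_sum (f : nat -> state -> R) K y :
  sum_f_R0 (fun k => jump_mean (f k) y) K = jump_mean (fun z => sum_f_R0 (fun k => f k z) K) y.
Proof.
  unfold jump_mean. rewrite sum_f_R0_lsum. apply lsum_ext. intros p _.
  rewrite scal_sum. apply sum_eq. intros; lra.
Qed.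

Lemma jump_mean_ext f g y :
  (forall p, In p (mv y) -> f (snd p) = g (snd p)) -> jump_mean f y = jump_mean g y.
Proof. intros H. apply lsum_ext. intros p Hp. now rewrite H. Qed.

Variable x : state.

Definition killed_step (h : state -> R) (y : state) : R :=
  if state_eqb y x then 0 else jump_mean h y.

(* [survival K y = P_y(tau_x >= K)], where [tau_x] is the number of jumps the
   chain needs to reach [x] (so [tau_x = 0] from [x] itself). *)
Fixpoint survival (K : nat) : state -> R :=
  match K with O => fun _ => 1 | S K' => killed_step (survival K') end.

Lemma killed_step_mono f g y :
  (forall p, In p (mv y) -> f (snd p) <= g (snd p)) -> killed_step f y <= killed_step g y.
Proof. intros H. unfold killed_step. destruct (state_eqb y x); [lra|]. now apply jump_mean_mono. Qed.

Lemma survival_bounds K y : 0 <= survival K y <= 1.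
Proof.
  revert y; induction K as [|K IH]; intros y; simpl; [lra|].
  unfold killed_step. destruct (state_eqb y x); [lra|]. split.
  - apply jump_mean_nonneg. intros; apply IH.
  - rewrite <- (jump_mean_const 1 y). apply jump_mean_mono. intros; apply IH.
Qed.

Lemma survival_succ_le K y : survival (S K) y <= survival K y.
Proof.
  revert y; induction K as [|K IH]; intros y.
  - apply survival_bounds.
  - apply killed_step_mono. intros; apply IH.
Qed.

Lemma survival_antitone k K y : (k <= K)%nat -> survival K y <= survival k y.
Proof.
  induction 1; [lra|]. eapply Rle_trans; [apply survival_succ_le|assumption].
Qed.

Lemma sum_hit_prob K y : sum_f_R0 (fun k => hit_prob mv x k y) K = 1 - survival (S K) y.
Proof.
  revert y; induction K as [|K IH]; intros y.
  - simpl. unfold killed_step. destruct (state_eqb y x); [lra|]. rewrite jump_mean_const; lra.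
  - rewrite sum_f_R0_succ_l. change (survival (S (S K)) y) with (killed_step (survival (S K)) y).
    unfold killed_step. simpl (hit_prob mv x 0 y).
    destruct (state_eqb y x) eqn:E.
    + rewrite (sum_eq _ (fun _ => 0)) by (intros; simpl; rewrite E; auto).
      rewrite sum_cte. lra.
    + rewrite (sum_eq _ (fun k => jump_mean (hit_prob mv x k) y)) by (intros; simpl; rewrite E; auto).
      rewrite jump_mean_sum.
      rewrite (jump_mean_ext _ (fun z => 1 + (-1) * survival (S K) z)) by (intros; rewrite IH; lra).
      rewrite jump_mean_plus, jump_mean_scal, jump_mean_const. lra.
Qed.

Lemma hit_prob_nonneg k y : 0 <= hit_prob mv x k y.
Proof.
  revert y; induction k as [|k IH]; intros y; simpl; destruct (state_eqb y x); try lra.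
  apply (jump_mean_nonneg (hit_prob mv x k)). intros; apply IH.
Qed.

Lemma sum_hit_prob_div_le q K y :
  0 < q -> sum_f_R0 (fun k => hit_prob mv x k y / q) K <= / q.
Proof.
  intros Hq. unfold Rdiv. rewrite <- scal_sum, sum_hit_prob.
  pose proof (survival_bounds (S K) y). pose proof (Rinv_0_lt_compat q Hq). nra.
Qed.

Lemma hit_time_nonneg k y : 0 <= hit_time mv x k y.
Proof.
  revert y; induction k as [|k IH]; intros y; simpl; try lra. destruct (state_eqb y x); try lra.
  apply (jump_mean_nonneg (fun z => hit_time mv x k z + hit_prob mv x k z / qtot mv y)).
  intros p _. apply Rplus_le_le_0_compat; [apply IH|].
  apply Rmult_le_pos; [apply hit_prob_nonneg|apply Rlt_le, Rinv_0_lt_compat, qtot_pos].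
Qed.

(* [survival_sum K y = E_y[min (tau_x + 1) (K + 1)]]. *)
Definition survival_sum (K : nat) (y : state) : R := sum_f_R0 (fun k => survival k y) K.

Lemma survival_sum_succ K y : survival_sum (S K) y = 1 + killed_step (survival_sum K) y.
Proof.
  unfold survival_sum. rewrite sum_f_R0_succ_l. f_equal. unfold killed_step.
  destruct (state_eqb y x) eqn:E.
  - rewrite (sum_eq _ (fun _ => 0)) by (intros; simpl; unfold killed_step; rewrite E; auto).
    rewrite sum_cte; lra.
  - rewrite <- jump_mean_sum. apply sum_eq. intros; simpl; unfold killed_step; rewrite E; auto.
Qed.

Lemma survival_sum_nonneg K y : 0 <= survival_sum K y.
Proof. apply cond_pos_sum. intros; apply survival_bounds. Qed.

Lemma sum_hit_time_le qmin K y : 0 < qmin -> (forall s, qmin <= qtot mv s) ->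
  sum_f_R0 (fun k => hit_time mv x k y) K <= survival_sum K y / qmin.
Proof.
  intros Hqmin Hq. assert (Hi : 0 < / qmin) by (apply Rinv_0_lt_compat; lra).
  revert y; induction K as [|K IH]; intros y.
  - simpl. unfold survival_sum; simpl. unfold Rdiv. lra.
  - rewrite sum_f_R0_succ_l, survival_sum_succ. unfold killed_step. simpl (hit_time mv x 0 y).
    destruct (state_eqb y x) eqn:E.
    + rewrite (sum_eq _ (fun _ => 0)) by (intros; simpl; rewrite E; auto).
      rewrite sum_cte. unfold Rdiv. lra.
    + rewrite (sum_eq _ (fun k => jump_mean (fun z => hit_time mv x k z + hit_prob mv x k z / qtot mv y) y))
        by (intros; simpl; rewrite E; auto).
      rewrite jump_mean_sum, Rplus_0_l.
      assert (Hqy : / qtot mv y <= / qmin) by (apply Rinv_le_contravar; auto).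
      eapply Rle_trans.
      * apply (jump_mean_mono _ (fun z => / qmin * survival_sum K z + / qtot mv y)).
        intros p _. rewrite sum_plus.
        pose proof (IH (snd p)). pose proof (sum_hit_prob_div_le (qtot mv y) K (snd p) (qtot_pos y)).
        unfold Rdiv in *. lra.
      * rewrite jump_mean_plus, jump_mean_scal, jump_mean_const. unfold Rdiv. lra.
Qed.

Variable D : state -> Prop.
Hypothesis D_closed : forall s p, D s -> In p (mv s) -> D (snd p).

Section Lyapunov.

Variable W : state -> R.
Hypothesis W_ge1 : forall y, D y -> 1 <= W y.
Hypothesis W_drift : forall y, D y -> y <> x -> jump_mean W y <= W y - 1.

Lemma survival_sum_le K y : D y -> survival_sum K y <= W y.
Proof.
  revert y; induction K as [|K IH]; intros y Hy.
  - unfold survival_sum; simpl. auto.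
  - rewrite survival_sum_succ. unfold killed_step. destruct (state_eqb y x) eqn:E.
    + pose proof (W_ge1 y Hy). lra.
    + pose proof (W_drift y Hy (state_eqb_false _ _ E)).
      assert (jump_mean (survival_sum K) y <= jump_mean W y).
      { apply jump_mean_mono. intros p Hp. apply IH. eapply D_closed; eauto. }
      lra.
Qed.

Lemma survival_le K y : D y -> survival K y <= W y / INR (S K).
Proof.
  intros Hy. assert (HS : 0 < INR (S K)) by (apply lt_0_INR; lia).
  assert (survival K y * INR (S K) <= W y).
  { eapply Rle_trans; [|apply (survival_sum_le K y Hy)].
    unfold survival_sum. rewrite <- sum_cte. apply sum_Rle. intros; apply survival_antitone; auto. }
  unfold Rdiv. apply Rmult_le_reg_r with (INR (S K)); auto.
  rewrite Rmult_assoc, Rinv_l by lra. lra.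
Qed.

Lemma ret_prob_sum_one : D x -> infinite_sum (ret_prob mv x) 1.
Proof.
  intros Hx. apply (Un_cv_of_dist_le _ _ (jump_mean W x)). intros K.
  assert (Hpart : sum_f_R0 (ret_prob mv x) (S K) = 1 - jump_mean (survival (S K)) x).
  { rewrite sum_f_R0_succ_l. simpl (ret_prob mv x 0).
    change (fun k => ret_prob mv x (S k)) with (fun k => jump_mean (hit_prob mv x k) x).
    rewrite jump_mean_sum.
    rewrite (jump_mean_ext _ (fun z => 1 + (-1) * survival (S K) z)) by (intros; rewrite sum_hit_prob; lra).
    rewrite jump_mean_plus, jump_mean_scal, jump_mean_const. lra. }
  assert (Hlo : 0 <= jump_mean (survival (S K)) x) by (apply jump_mean_nonneg; intros; apply survival_bounds).
  assert (Hhi : jump_mean (survival (S K)) x <= jump_mean W x / INR (S (S K))).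
  { unfold Rdiv. rewrite Rmult_comm, <- jump_mean_scal. apply jump_mean_mono. intros p Hp.
    rewrite Rmult_comm. apply survival_le. eapply D_closed; eauto. }
  unfold R_dist. rewrite Hpart, Rabs_left1; lra.
Qed.

Lemma ret_time_summable qmin : 0 < qmin -> (forall s, qmin <= qtot mv s) -> D x ->
  exists T, infinite_sum (ret_time mv x) T.
Proof.
  intros Hqmin Hq Hx.
  assert (Hqx := qtot_pos x).
  set (B := jump_mean (fun z => / qmin * W z + / qtot mv x) x).
  assert (HB : 0 <= B).
  { apply jump_mean_nonneg. intros p Hp. pose proof (W_ge1 _ (D_closed _ _ Hx Hp)).
    pose proof (Rinv_0_lt_compat _ Hqmin). pose proof (Rinv_0_lt_compat _ Hqx). nra. }
  assert (Hbound : forall K, sum_f_R0 (ret_time mv x) K <= B).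
  { intros [|K]; [simpl; lra|].
    rewrite sum_f_R0_succ_l. simpl (ret_time mv x 0).
    change (fun k => ret_time mv x (S k))
      with (fun k => jump_mean (fun z => hit_time mv x k z + hit_prob mv x k z / qtot mv x) x).
    rewrite jump_mean_sum, Rplus_0_l. apply jump_mean_mono. intros p Hp.
    rewrite sum_plus.
    pose proof (sum_hit_time_le qmin K (snd p) Hqmin Hq).
    pose proof (survival_sum_le K (snd p) (D_closed _ _ Hx Hp)).
    pose proof (sum_hit_prob_div_le (qtot mv x) K (snd p) Hqx).
    pose proof (Rinv_0_lt_compat _ Hqmin). unfold Rdiv in *. nra. }
  destruct (Un_cv_crit (sum_f_R0 (ret_time mv x))) as [T HT].
  - intros k. rewrite tech5. assert (0 <= ret_time mv x (S k)); [|lra].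
    apply (jump_mean_nonneg (fun z => hit_time mv x k z + hit_prob mv x k z / qtot mv x)).
    intros p _. apply Rplus_le_le_0_compat; [apply hit_time_nonneg|].
    apply Rmult_le_pos; [apply hit_prob_nonneg|apply Rlt_le, Rinv_0_lt_compat; lra].
  - exists B. intros r [k ->]. apply Hbound.
  - exists T. exact HT.
Qed.

End Lyapunov.

(* The drift of [V] is only bounded on the region [F]; adding a multiple of
   [survival_sum J] pays for it, since from [F] the chain reaches [x] within
   [J] jumps with probability at least [p0]. *)
Lemma lyapunov_of_drift (V : state -> R) (F : state -> bool) (c0 p0 : R) (J : nat) :
  0 <= c0 -> 0 < p0 -> (forall y, D y -> 0 <= V y) ->
  (forall y, D y -> F y = false -> jump_mean V y <= V y - 1) ->
  (forall y, D y -> F y = true -> jump_mean V y <= V y + c0) ->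
  (forall y, D y -> F y = true -> survival J y <= 1 - p0) ->
  exists W, (forall y, D y -> 1 <= W y) /\
            (forall y, D y -> y <> x -> jump_mean W y <= W y - 1).
Proof.
  intros Hc0 Hp0 HV0 Hout Hin Hsurv.
  set (beta := (c0 + 1) / p0).
  assert (Hbeta : beta * p0 = c0 + 1) by (unfold beta; field; lra).
  assert (Hbeta0 : 0 <= beta) by (unfold beta; apply Rle_mult_inv_pos; lra).
  exists (fun z => V z + beta * survival_sum J z + 1). split.
  - intros y Hy. pose proof (survival_sum_nonneg J y). pose proof (HV0 y Hy). nra.
  - intros y Hy Hyx.
    rewrite !jump_mean_plus, jump_mean_scal, jump_mean_const.
    assert (HS : jump_mean (survival_sum J) y = survival_sum J y + survival (S J) y - 1).
    { pose proof (survival_sum_succ J y) as H.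
      unfold killed_step in H. rewrite (state_eqb_neq _ _ Hyx) in H.
      unfold survival_sum in *. rewrite tech5 in H. lra. }
    rewrite HS. pose proof (survival_succ_le J y). pose proof (survival_bounds (S J) y).
    destruct (F y) eqn:HF.
    + pose proof (Hin y Hy HF). pose proof (Hsurv y Hy HF). nra.
    + pose proof (Hout y Hy HF). nra.
Qed.

Theorem positive_recurrent_at_of_drift (V : state -> R) (F : state -> bool)
    (c0 p0 qmin : R) (J : nat) :
  0 < qmin -> (forall s, qmin <= qtot mv s) -> D x ->
  0 <= c0 -> 0 < p0 -> (forall y, D y -> 0 <= V y) ->
  (forall y, D y -> F y = false -> jump_mean V y <= V y - 1) ->
  (forall y, D y -> F y = true -> jump_mean V y <= V y + c0) ->
  (forall y, D y -> F y = true -> survival J y <= 1 - p0) ->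
  infinite_sum (ret_prob mv x) 1 /\ exists T, infinite_sum (ret_time mv x) T.
Proof.
  intros Hqmin Hq Hx Hc0 Hp0 HV0 Hout Hin Hsurv.
  destruct (lyapunov_of_drift V F c0 p0 J Hc0 Hp0 HV0 Hout Hin Hsurv) as [W [HW1 HW]].
  split; [apply (ret_prob_sum_one W)|apply (ret_time_summable W HW1 HW qmin)]; auto.
Qed.

Inductive path_to_target (d : R) : nat -> state -> Prop :=
  | path_here : path_to_target d 0 x
  | path_jump k y z r : In (r, z) (mv y) -> d <= r / qtot mv y ->
      path_to_target d k z -> path_to_target d (S k) y.

Lemma survival_le_of_path d k y : 0 <= d <= 1 -> path_to_target d k y ->
  forall K, (k < K)%nat -> survival K y <= 1 - d ^ k.
Proof.
  intros Hd Hpath. induction Hpath as [|k y z r Hin Hr Hpath IH]; intros K HK.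
  - destruct K as [|K]; [lia|]. simpl. unfold killed_step. rewrite state_eqb_refl. lra.
  - destruct K as [|K]; [lia|]. simpl survival. unfold killed_step.
    assert (Hdk : d ^ k <= 1) by (rewrite <- (pow1 k); apply pow_incr; lra).
    assert (0 <= d ^ k) by (apply pow_le; lra).
    destruct (state_eqb y x); [simpl; nra|].
    eapply Rle_trans.
    + apply (lsum_le_drop (fun p => fst p / qtot mv y) (fun p => survival K (snd p)) (mv y) (r, z) Hin).
      * intros; apply jump_prob_nonneg; auto.
      * intros; apply survival_bounds.
    + rewrite lsum_jump_prob. simpl fst; simpl snd.
      pose proof (IH K ltac:(lia)). simpl. nra.
Qed.

Lemma reach_of_path d k y : 0 < d -> path_to_target d k y -> reach mv y x.
Proof.
  intros Hd Hpath. induction Hpath as [|k y z r Hin Hr Hpath IH]; [constructor|].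
  apply reach_step with z r; auto.
  pose proof (qtot_pos y).
  replace r with (r / qtot mv y * qtot mv y) by (field; lra). nra.
Qed.

End JumpChain.

Lemma rsum_S f n : rsum f (S n) = rsum f n + f n.
Proof.
  unfold rsum. rewrite seq_S, map_app, fold_right_app. simpl.
  generalize (map f (seq 0 n)). intros l. induction l; simpl; lra.
Qed.

Lemma rsum_S_l f n : rsum f (S n) = f O + rsum (fun j => f (S j)) n.
Proof. unfold rsum. simpl. rewrite <- seq_shift, map_map. reflexivity. Qed.

Lemma rsum_ext f g n : (forall i, (i < n)%nat -> f i = g i) -> rsum f n = rsum g n.
Proof. induction n; intros H; [reflexivity|]. rewrite !rsum_S, IHn, H; auto. Qed.

Lemma rsum_le f g n : (forall i, (i < n)%nat -> f i <= g i) -> rsum f n <= rsum g n.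
Proof.
  induction n; intros H; [unfold rsum; simpl; lra|]. rewrite !rsum_S.
  assert (rsum f n <= rsum g n) by (apply IHn; intros; apply H; lia).
  specialize (H n ltac:(lia)). lra.
Qed.

Lemma rsum_plus f g n : rsum (fun i => f i + g i) n = rsum f n + rsum g n.
Proof. induction n; [unfold rsum; simpl; lra|]. rewrite !rsum_S, IHn. lra. Qed.

Lemma rsum_scal c f n : rsum (fun i => c * f i) n = c * rsum f n.
Proof. induction n; [unfold rsum; simpl; lra|]. rewrite !rsum_S, IHn. lra. Qed.

Lemma rsum_const c n : rsum (fun _ => c) n = INR n * c.
Proof. induction n; [unfold rsum; simpl; lra|]. rewrite rsum_S, IHn, S_INR. lra. Qed.

Lemma rsum_nonneg f n : (forall i, (i < n)%nat -> 0 <= f i) -> 0 <= rsum f n.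
Proof. intros H. replace 0 with (rsum (fun _ => 0) n) by (rewrite rsum_const; lra). now apply rsum_le. Qed.

Lemma rsum_indicator_mul i (g : nat -> R) n : (i < n)%nat ->
  rsum (fun j => (if Nat.eqb j i then 1 else 0) * g j) n = g i.
Proof.
  induction n; intros Hi; [lia|]. rewrite rsum_S.
  destruct (Nat.eq_dec i n) as [->|Hne].
  - rewrite Nat.eqb_refl, (rsum_ext _ (fun _ => 0)), rsum_const; [lra|].
    intros j Hj. destruct (Nat.eqb_spec j n); [lia|lra].
  - rewrite IHn by lia. destruct (Nat.eqb_spec n i); [lia|lra].
Qed.

Lemma rsum_swap (f : nat -> nat -> R) n m :
  rsum (fun i => rsum (fun j => f i j) m) n = rsum (fun j => rsum (fun i => f i j) n) m.
Proof.
  induction n.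
  - rewrite (rsum_ext (fun j => rsum (fun i => f i j) 0) (fun _ => 0)) by reflexivity.
    rewrite rsum_const. unfold rsum; simpl; lra.
  - rewrite rsum_S, IHn, <- rsum_plus. apply rsum_ext. intros; rewrite rsum_S; lra.
Qed.

Lemma rsum_permute (sigma : nat -> nat) (h : nat -> R) n :
  (forall i j, (i < n)%nat -> (j < n)%nat -> sigma i = sigma j -> i = j) ->
  (forall i, (i < n)%nat -> (sigma i < n)%nat) ->
  rsum (fun j => h (sigma j)) n = rsum h n.
Proof.
  intros Hinj Hrange. unfold rsum. rewrite <- (map_map sigma h).
  assert (Hperm : Permutation (map sigma (seq 0 n)) (seq 0 n)).
  { apply Permutation_map_same_l.
    - apply NoDup_map_NoDup_ForallPairs; [|apply seq_NoDup].
      intros a b Ha Hb. apply in_seq in Ha, Hb. apply Hinj; lia.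
    - intros a Ha. apply in_map_iff in Ha. destruct Ha as [j [<- Hj]]. apply in_seq in Hj.
      apply in_seq. pose proof (Hrange j ltac:(lia)). lia. }
  induction (Permutation_map h Hperm); simpl; lra.
Qed.

Lemma length_upd f i s : length (upd f i s) = length s.
Proof. revert i; induction s; intros [|i]; simpl; auto. Qed.

Lemma nth_upd f i s j : (i < length s)%nat ->
  nth j (upd f i s) O = if Nat.eqb j i then f (nth i s O) else nth j s O.
Proof.
  revert i j; induction s; intros i j Hi; simpl in Hi; [lia|].
  destruct i, j; simpl; auto. apply IHs; lia.
Qed.

Lemma list_sum_upd_S i s : (i < length s)%nat -> list_sum (upd S i s) = S (list_sum s).
Proof. revert i; induction s as [|a s IH]; intros [|i] Hi; simpl in *; try lia. rewrite (IH i); lia. Qed.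

Lemma list_sum_upd_pred i s : (0 < nth i s O)%nat -> S (list_sum (upd Nat.pred i s)) = list_sum s.
Proof.
  revert i; induction s as [|a s IH]; intros [|i] Hi; simpl in *; try lia.
  rewrite <- (IH i) by auto. lia.
Qed.

Lemma list_sum_pos_nth s : (0 < list_sum s)%nat -> exists i, (i < length s)%nat /\ (0 < nth i s O)%nat.
Proof.
  induction s as [|a s IH]; simpl; intros H; [lia|].
  destruct a as [|a].
  - destruct (IH H) as [i Hi]. exists (S i); simpl; lia.
  - exists O; simpl; lia.
Qed.

Lemma Forall2_le_sum_lt y z : Forall2 le y z -> (list_sum y < list_sum z)%nat ->
  exists i, (i < length y)%nat /\ (nth i y O < nth i z O)%nat.
Proof.
  induction 1 as [|a b y z Hab Hyz IH]; simpl; intros H; [lia|].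
  destruct (Nat.lt_ge_cases a b).
  - exists O; simpl; lia.
  - destruct IH as [i Hi]; [pose proof (Forall2_length Hyz); lia|]. exists (S i); simpl; lia.
Qed.

Lemma Forall2_le_sum_eq y z : Forall2 le y z -> list_sum y = list_sum z -> y = z.
Proof.
  induction 1 as [|a b y z Hab Hyz IH]; simpl; intros H; [reflexivity|].
  assert (list_sum y <= list_sum z)%nat.
  { clear IH H. induction Hyz; simpl; lia. }
  f_equal; [lia|apply IH; lia].
Qed.

Lemma Forall2_le_upd_S i y z : Forall2 le y z -> (nth i y O < nth i z O)%nat ->
  Forall2 le (upd S i y) z.
Proof.
  intros H; revert i; induction H as [|a b y z Hab Hyz IH]; intros [|i] Hi; simpl in *;
    constructor; auto; lia.
Qed.

Lemma Forall2_le_of_sum_0 y z : length y = length z -> list_sum y = O -> Forall2 le y z.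
Proof.
  revert z; induction y as [|a y IH]; intros [|b z] Hl Hs; simpl in *; try discriminate; constructor.
  - lia.
  - apply IH; lia.
Qed.

Lemma ln_1_plus_le u : -1 < u -> ln (1 + u) <= u.
Proof.
  intros Hu. rewrite <- (ln_exp u) at 2.
  destruct (Rle_lt_or_eq_dec _ _ (exp_ineq1_le u)) as [H|H].
  - left; apply ln_increasing; lra.
  - rewrite H; lra.
Qed.

Lemma ln_1_plus_ge u : 0 <= u -> u / (1 + u) <= ln (1 + u).
Proof.
  intros Hu. pose proof (ln_1_plus_le (- (u / (1 + u)))) as H.
  replace (1 + - (u / (1 + u))) with (/ (1 + u)) in H by (field; lra).
  rewrite ln_Rinv in H by lra.
  assert (u / (1 + u) < 1) by (apply Rmult_lt_reg_r with (1 + u); [lra|]; field_simplify; lra).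
  lra.
Qed.

Lemma ln2_pos : 0 < ln 2.
Proof. pose proof ln_lt_2; lra. Qed.

Definition occ (s : state) (j : nat) : R := INR (nth j s O).

Lemma occ_nonneg s j : 0 <= occ s j.
Proof. apply pos_INR. Qed.

Lemma occ_cases s j : occ s j = 0 \/ 1 <= occ s j.
Proof.
  unfold occ. destruct (nth j s O) as [|k]; [now left|right].
  rewrite S_INR. pose proof (pos_INR k); lra.
Qed.

Lemma rsum_occ s : rsum (occ s) (length s) = INR (list_sum s).
Proof.
  induction s as [|a s IH]; [reflexivity|].
  simpl length. rewrite rsum_S_l. unfold occ at 1. simpl list_sum. simpl nth.
  change (fun j => occ (a :: s) (S j)) with (occ s). rewrite IH, plus_INR. reflexivity.
Qed.

Lemma occ_upd f i s d j : (i < length s)%nat -> INR (f (nth i s O)) = INR (nth i s O) + d ->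
  occ (upd f i s) j = occ s j + (if Nat.eqb j i then 1 else 0) * d.
Proof.
  intros Hi Hf. unfold occ. rewrite nth_upd by auto. destruct (Nat.eqb_spec j i); subst; lra.
Qed.

Section SINRChain.

Variables (lam eps C L N0 : R) (leps : nat -> nat -> R) (n : nat).
Hypotheses (Hlam : 0 < lam) (Heps : 0 < eps) (HC : 0 < C) (HL : 0 < L) (HN0 : 0 < N0)
  (Hn : (1 <= n)%nat).
Hypothesis leps_range : forall i j, (i < n)%nat -> (j < n)%nat -> 0 <= leps i j <= 1.
Hypothesis leps_diag : forall i, (i < n)%nat -> leps i i = 1.
Hypothesis leps_sym : forall i j, (i < n)%nat -> (j < n)%nat -> leps i j = leps j i.
Hypothesis leps_row_sum : forall i, (i < n)%nat -> rsum (leps i) n = rsum (fun k => leps k O) n.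

Let mv := moves lam eps C L N0 leps n.
Let b := lam * eps ^ 2.
Let c := C / (L * ln 2).
Let dmax := c * (1 + 1 / N0).
Let S0 := rsum (fun k => leps k O) n.
Let Qmax := INR n * (b + dmax).

Definition load (s : state) (i : nat) : R := rsum (fun j => leps i j * occ s j) n.

Definition energy (s : state) : R := rsum (fun i => occ s i * load s i) n.

Lemma b_pos : 0 < b.
Proof. apply Rmult_lt_0_compat; [lra|apply pow_lt; lra]. Qed.

Lemma c_pos : 0 < c.
Proof. pose proof ln2_pos. apply Rdiv_lt_0_compat; nra. Qed.

Lemma dmax_nonneg : 0 <= dmax.
Proof. pose proof c_pos. assert (0 < 1 / N0) by (apply Rdiv_lt_0_compat; lra). unfold dmax; nra. Qed.

Lemma load_ge_occ s i : (i < n)%nat -> occ s i <= load s i.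
Proof.
  intros Hi.
  apply Rle_trans with (rsum (fun j => (if Nat.eqb j i then 1 else 0) * (leps i j * occ s j)) n).
  - rewrite (rsum_indicator_mul i (fun j => leps i j * occ s j)), leps_diag by auto. lra.
  - apply rsum_le. intros j Hj. pose proof (leps_range i j Hi Hj). pose proof (occ_nonneg s j).
    destruct (Nat.eqb j i); nra.
Qed.

Lemma load_nonneg s i : (i < n)%nat -> 0 <= load s i.
Proof. intros Hi. eapply Rle_trans; [apply occ_nonneg|now apply load_ge_occ]. Qed.

Lemma load_le_total s i : (i < n)%nat -> load s i <= rsum (occ s) n.
Proof.
  intros Hi. apply rsum_le. intros j Hj.
  pose proof (leps_range i j Hi Hj). pose proof (occ_nonneg s j). nra.
Qed.

Lemma sum_load s : rsum (load s) n = S0 * rsum (occ s) n.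
Proof.
  unfold load. rewrite rsum_swap, <- rsum_scal. apply rsum_ext. intros j Hj.
  rewrite (rsum_ext _ (fun i => occ s j * leps j i)) by (intros i Hi; rewrite (leps_sym i j) by auto; lra).
  rewrite rsum_scal. unfold S0. rewrite <- (leps_row_sum j Hj). lra.
Qed.

Lemma death_rate_eq i s : (i < n)%nat ->
  death_rate C L N0 leps n i s = c * occ s i * ln (1 + 1 / (N0 + load s i - 1)).
Proof.
  intros Hi.
  assert (Hinterf : interf leps n i s = load s i - 1).
  { unfold interf, load.
    rewrite (rsum_ext _ (fun j => leps i j * occ s j + (-1) * ((if Nat.eqb j i then 1 else 0) * leps i j)))
      by (intros j Hj; unfold occ; destruct (Nat.eqb j i); lra).
    rewrite rsum_plus, rsum_scal, (rsum_indicator_mul i (leps i)), leps_diag by auto. lra. }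
  unfold death_rate, log2. rewrite Hinterf. unfold c, occ. pose proof ln2_pos.
  replace (N0 + load s i - 1) with (N0 + (load s i - 1)) by ring. field. lra.
Qed.

Lemma death_rate_empty i s : (i < n)%nat -> occ s i = 0 -> death_rate C L N0 leps n i s = 0.
Proof. intros Hi H0. rewrite death_rate_eq, H0 by auto. lra. Qed.

(* With [u = 1 / (N0 + A_i - 1)] one has [u / (1 + u) <= ln (1 + u) <= u], where
   [u / (1 + u) = 1 / (N0 + A_i)]. *)
Lemma death_rate_occupied i s : (i < n)%nat -> 1 <= occ s i ->
  c * occ s i / (N0 + load s i) <= death_rate C L N0 leps n i s <= dmax.
Proof.
  intros Hi H1. rewrite death_rate_eq by auto.
  pose proof c_pos. pose proof (load_ge_occ s i Hi).
  set (A := load s i) in *. set (X := occ s i) in *.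
  set (u := 1 / (N0 + A - 1)).
  assert (Hu : 0 < u) by (apply Rdiv_lt_0_compat; lra).
  pose proof (ln_1_plus_le u ltac:(lra)) as Hup.
  pose proof (ln_1_plus_ge u ltac:(lra)) as Hlo.
  replace (u / (1 + u)) with (1 / (N0 + A)) in Hlo by (unfold u; field; lra).
  assert (HXu : X * u <= 1 + 1 / N0).
  { unfold u. apply Rmult_le_reg_r with (N0 * (N0 + A - 1)); [nra|].
    field_simplify; try lra. nra. }
  split.
  - replace (c * X / (N0 + A)) with (c * X * (1 / (N0 + A))) by (field; lra).
    apply Rmult_le_compat_l; nra.
  - unfold dmax. rewrite Rmult_assoc. apply Rmult_le_compat_l; [lra|]. nra.
Qed.

Lemma death_rate_bounds i s : (i < n)%nat -> 0 <= death_rate C L N0 leps n i s <= dmax.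
Proof.
  intros Hi. pose proof dmax_nonneg. destruct (occ_cases s i) as [H0|H1].
  - rewrite death_rate_empty by auto. lra.
  - pose proof (death_rate_occupied i s Hi H1) as [Hlo Hhi].
    split; [|exact Hhi]. eapply Rle_trans; [|exact Hlo].
    pose proof c_pos. pose proof (load_nonneg s i Hi).
    apply Rle_mult_inv_pos; nra.
Qed.

Lemma in_moves s p : In p (mv s) ->
  exists i, (i < n)%nat /\
    (p = (b, upd S i s) \/ p = (death_rate C L N0 leps n i s, upd Nat.pred i s)).
Proof.
  unfold mv, moves. rewrite in_flat_map. intros [i [Hi Hp]]. apply in_seq in Hi.
  exists i; split; [lia|]. simpl in Hp. destruct Hp as [E|[E|[]]]; auto.
Qed.

Lemma moves_birth s i : (i < n)%nat -> In (b, upd S i s) (mv s).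
Proof. intros Hi. apply in_flat_map. exists i. split; [apply in_seq; lia|now left]. Qed.

Lemma moves_death s i : (i < n)%nat ->
  In (death_rate C L N0 leps n i s, upd Nat.pred i s) (mv s).
Proof. intros Hi. apply in_flat_map. exists i. split; [apply in_seq; lia|right; now left]. Qed.

Lemma lsum_moves g s :
  lsum g (mv s) = rsum (fun i => g (b, upd S i s) + g (death_rate C L N0 leps n i s, upd Nat.pred i s)) n.
Proof.
  unfold mv, moves, b. rewrite lsum_flat_map. unfold rsum. f_equal. apply map_ext. intros i.
  unfold lsum; simpl. lra.
Qed.

Lemma qtot_moves s : qtot mv s = rsum (fun i => b + death_rate C L N0 leps n i s) n.
Proof. exact (lsum_moves fst s). Qed.

Lemma qtot_ge_b s : b <= qtot mv s.
Proof.
  rewrite qtot_moves. apply Rle_trans with (rsum (fun _ => b) n).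
  - rewrite rsum_const. assert (1 <= INR n) by (apply (le_INR 1); auto). pose proof b_pos. nra.
  - apply rsum_le. intros i Hi. pose proof (death_rate_bounds i s Hi). lra.
Qed.

Lemma qtot_le_Qmax s : qtot mv s <= Qmax.
Proof.
  rewrite qtot_moves. unfold Qmax. rewrite <- rsum_const. apply rsum_le.
  intros i Hi. pose proof (death_rate_bounds i s Hi). lra.
Qed.

Lemma moves_rate_nonneg s p : In p (mv s) -> 0 <= fst p.
Proof.
  intros Hp. destruct (in_moves s p Hp) as [i [Hi [-> | ->]]]; simpl.
  - pose proof b_pos; lra.
  - apply death_rate_bounds; auto.
Qed.

Lemma moves_qtot_pos s : 0 < qtot mv s.
Proof. pose proof (qtot_ge_b s). pose proof b_pos. lra. Qed.

Lemma moves_length s p : length s = n -> In p (mv s) -> length (snd p) = n.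
Proof.
  intros Hs Hp. destruct (in_moves s p Hp) as [i [Hi [-> | ->]]]; simpl; now rewrite length_upd.
Qed.

Lemma energy_upd f i s d : length s = n -> (i < n)%nat ->
  INR (f (nth i s O)) = INR (nth i s O) + d ->
  energy (upd f i s) = energy s + 2 * d * load s i + d * d.
Proof.
  intros Hl Hi Hf.
  assert (Hocc : forall j, occ (upd f i s) j = occ s j + (if Nat.eqb j i then 1 else 0) * d)
    by (intros; apply occ_upd; auto; lia).
  assert (Hload : forall k, load (upd f i s) k = load s k + d * leps k i).
  { intros k. unfold load.
    rewrite (rsum_ext _ (fun j => leps k j * occ s j + d * ((if Nat.eqb j i then 1 else 0) * leps k j)))
      by (intros; rewrite Hocc; lra).
    rewrite rsum_plus, rsum_scal, (rsum_indicator_mul i (leps k)) by auto. lra. }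
  unfold energy.
  rewrite (rsum_ext _ (fun k => occ s k * load s k + (d * (leps i k * occ s k) +
     ((if Nat.eqb k i then 1 else 0) * (d * load s k + d * d * leps k i))))).
  2:{ intros k Hk. rewrite Hocc, Hload, (leps_sym k i) by auto. lra. }
  rewrite !rsum_plus, rsum_scal,
    (rsum_indicator_mul i (fun k => d * load s k + d * d * leps k i)), leps_diag by auto.
  fold (load s i). lra.
Qed.

(* The death term is controlled by [c (X_i - N0) <= d_i A_i], a consequence of
   [d_i >= c X_i / (N0 + A_i)]. *)
Lemma energy_step_cell y i : length y = n -> (i < n)%nat ->
  b * energy (upd S i y) + death_rate C L N0 leps n i y * energy (upd Nat.pred i y) <=
  (b + death_rate C L N0 leps n i y) * energy y +
  (2 * b * load y i + b + dmax + 2 * c * N0 - 2 * c * occ y i).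
Proof.
  intros Hy Hi.
  assert (Hbirth : energy (upd S i y) = energy y + 2 * 1 * load y i + 1 * 1)
    by (apply energy_upd; auto; rewrite S_INR; lra).
  pose proof b_pos as Hb. pose proof c_pos as Hc. pose proof dmax_nonneg as Hdmax.
  pose proof (load_ge_occ y i Hi) as HA. pose proof (load_nonneg y i Hi) as HA0.
  destruct (occ_cases y i) as [H0|H1].
  - rewrite death_rate_empty, Hbirth, H0 by auto. nra.
  - assert (Hdeath : energy (upd Nat.pred i y) = energy y + 2 * (-1) * load y i + (-1) * (-1)).
    { apply energy_upd; auto. unfold occ in H1. destruct (nth i y O) as [|k].
      - simpl in H1. lra.
      - simpl Nat.pred. rewrite S_INR. lra. }
    rewrite Hbirth, Hdeath.
    destruct (death_rate_occupied i y Hi H1) as [Hlo Hhi].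
    set (A := load y i) in *. set (X := occ y i) in *. set (dr := death_rate C L N0 leps n i y) in *.
    assert (Hkey : c * (X - N0) <= dr * A).
    { apply Rle_trans with (c * X / (N0 + A) * A); [|apply Rmult_le_compat_r; auto].
      replace (c * X / (N0 + A) * A) with (c * (X * A / (N0 + A))) by (field; lra).
      apply Rmult_le_compat_l; [lra|].
      apply Rmult_le_reg_r with (N0 + A); [lra|]. unfold Rdiv.
      rewrite Rmult_assoc, Rinv_l by lra. nra. }
    nra.
Qed.

Let K0 := INR n * (b + dmax + 2 * c * N0).

Lemma energy_drift y : length y = n ->
  jump_mean mv energy y <= energy y + (2 * (b * S0 - c) * rsum (occ y) n + K0) / qtot mv y.
Proof.
  intros Hy. pose proof (moves_qtot_pos y) as Hq.
  assert (Hsum : qtot mv y * jump_mean mv energy y =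
     rsum (fun i => b * energy (upd S i y) +
                    death_rate C L N0 leps n i y * energy (upd Nat.pred i y)) n).
  { unfold jump_mean. rewrite <- lsum_scal, lsum_moves. apply rsum_ext. intros i _.
    simpl. field. lra. }
  assert (Hbound : qtot mv y * jump_mean mv energy y <=
     qtot mv y * energy y + (2 * (b * S0 - c) * rsum (occ y) n + K0)).
  { rewrite Hsum. eapply Rle_trans; [apply rsum_le; intros i Hi; apply energy_step_cell; auto|].
    rewrite (rsum_ext _ (fun i => energy y * (b + death_rate C L N0 leps n i y) +
        (2 * b * load y i + ((b + dmax + 2 * c * N0) + (-2 * c) * occ y i)))) by (intros; lra).
    rewrite rsum_plus, rsum_scal, <- qtot_moves, (rsum_plus (fun i => 2 * b * load y i)),
      (rsum_scal (2 * b)), sum_load, rsum_plus, rsum_const, rsum_scal.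
    unfold K0. lra. }
  apply Rmult_le_reg_l with (qtot mv y); [exact Hq|].
  replace (qtot mv y * (energy y + (2 * (b * S0 - c) * rsum (occ y) n + K0) / qtot mv y))
    with (qtot mv y * energy y + (2 * (b * S0 - c) * rsum (occ y) n + K0)) by (field; lra).
  exact Hbound.
Qed.

Lemma energy_nonneg y : 0 <= energy y.
Proof. apply rsum_nonneg. intros i Hi. apply Rmult_le_pos; [apply occ_nonneg|now apply load_nonneg]. Qed.

Lemma total_occ y : length y = n -> rsum (occ y) n = INR (list_sum y).
Proof. intros Hy. rewrite <- Hy. apply rsum_occ. Qed.

Lemma energy_drift_far R0 y : length y = n -> b * S0 < c ->
  K0 + Qmax < 2 * (c - b * S0) * INR R0 -> (R0 < list_sum y)%nat ->
  jump_mean mv energy y <= energy y - 1.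
Proof.
  intros Hy Hst HR0 Hfar. eapply Rle_trans; [now apply energy_drift|].
  rewrite total_occ by auto.
  pose proof (moves_qtot_pos y). pose proof (qtot_le_Qmax y).
  assert (INR R0 <= INR (list_sum y)) by (apply le_INR; lia).
  assert (HG : 2 * (b * S0 - c) * INR (list_sum y) + K0 <= - qtot mv y) by nra.
  assert ((2 * (b * S0 - c) * INR (list_sum y) + K0) / qtot mv y <= -1); [|lra].
  apply Rmult_le_reg_r with (qtot mv y); [lra|].
  unfold Rdiv. rewrite Rmult_assoc, Rinv_l by lra. lra.
Qed.

Lemma energy_drift_near y : length y = n -> b * S0 < c ->
  jump_mean mv energy y <= energy y + K0 / b.
Proof.
  intros Hy Hst. eapply Rle_trans; [now apply energy_drift|].
  rewrite total_occ by auto.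
  pose proof (qtot_ge_b y). pose proof b_pos. pose proof (pos_INR (list_sum y)).
  assert (HK0 : 0 <= K0).
  { unfold K0. pose proof c_pos. pose proof dmax_nonneg. apply Rmult_le_pos; [apply pos_INR|nra]. }
  apply Rplus_le_compat_l. unfold Rdiv. apply Rle_trans with (K0 * / qtot mv y).
  - apply Rmult_le_compat_r; [apply Rlt_le, Rinv_0_lt_compat; lra|nra].
  - apply Rmult_le_compat_l; [lra|]. apply Rinv_le_contravar; lra.
Qed.

(* Every jump of rate at least [min b (c / (N0 + R0))] has probability at least
   [min_jump_prob R0], since the total rate never exceeds [Qmax]. *)
Definition min_jump_prob (R0 : nat) : R := Rmin b (c / (N0 + INR R0)) / Qmax.

Lemma min_jump_prob_bounds R0 : 0 < min_jump_prob R0 <= 1.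
Proof.
  pose proof b_pos. pose proof (pos_INR R0).
  assert (Hmin : 0 < Rmin b (c / (N0 + INR R0))).
  { apply Rmin_glb_lt; [lra|]. apply Rdiv_lt_0_compat; [apply c_pos|lra]. }
  assert (HQ : b <= Qmax).
  { unfold Qmax. assert (1 <= INR n) by (apply (le_INR 1); auto). pose proof dmax_nonneg. nra. }
  pose proof (Rmin_l b (c / (N0 + INR R0))).
  unfold min_jump_prob. split; [apply Rdiv_lt_0_compat; lra|].
  apply Rmult_le_reg_r with Qmax; [lra|]. unfold Rdiv. rewrite Rmult_assoc, Rinv_l by lra. lra.
Qed.

Lemma min_jump_prob_le r s R0 : Rmin b (c / (N0 + INR R0)) <= r -> min_jump_prob R0 <= r / qtot mv s.
Proof.
  intros Hr. pose proof (min_jump_prob_bounds R0) as [Hpos _].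
  pose proof (moves_qtot_pos s). pose proof (qtot_le_Qmax s).
  unfold min_jump_prob in *. unfold Rdiv in *.
  assert (0 < / Qmax) by (apply Rinv_0_lt_compat; lra).
  assert (0 < Rmin b (c / (N0 + INR R0))) by nra.
  apply Rle_trans with (r * / Qmax).
  - apply Rmult_le_compat_r; lra.
  - apply Rmult_le_compat_l; [lra|]. apply Rinv_le_contravar; lra.
Qed.

Lemma death_rate_ge_low_total j y R0 : length y = n -> (j < n)%nat -> (0 < nth j y O)%nat ->
  (list_sum y <= R0)%nat -> c / (N0 + INR R0) <= death_rate C L N0 leps n j y.
Proof.
  intros Hy Hj Hpos Hsum.
  assert (H1 : 1 <= occ y j) by (unfold occ; apply (le_INR 1) in Hpos; simpl in Hpos; lra).
  destruct (death_rate_occupied j y Hj H1) as [Hlo _]. eapply Rle_trans; [|exact Hlo].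
  pose proof (load_le_total y j Hj). pose proof (load_nonneg y j Hj). pose proof c_pos.
  rewrite total_occ in * by auto.
  assert (INR (list_sum y) <= INR R0) by (apply le_INR; auto).
  unfold Rdiv. rewrite Rmult_assoc. apply Rmult_le_compat_l; [lra|].
  apply Rle_trans with (/ (N0 + load y j)).
  - apply Rinv_le_contravar; lra.
  - rewrite <- (Rmult_1_l (/ (N0 + load y j))) at 1.
    apply Rmult_le_compat_r; [apply Rlt_le, Rinv_0_lt_compat|]; lra.
Qed.

Lemma path_up x R0 k y : Forall2 le y x -> list_sum x = (list_sum y + k)%nat ->
  length x = n -> path_to_target mv x (min_jump_prob R0) k y.
Proof.
  revert y; induction k as [|k IH]; intros y Hyx Hsum Hx.
  - rewrite (Forall2_le_sum_eq y x Hyx ltac:(lia)). constructor.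
  - destruct (Forall2_le_sum_lt y x Hyx ltac:(lia)) as [j [Hj Hlt]].
    pose proof (Forall2_length Hyx).
    apply path_jump with (upd S j y) b.
    + apply moves_birth; lia.
    + apply min_jump_prob_le, Rmin_l.
    + apply IH; auto; [now apply Forall2_le_upd_S|]. rewrite list_sum_upd_S; lia.
Qed.

Lemma path_down x R0 k y : length x = n -> length y = n -> list_sum y = k -> (k <= R0)%nat ->
  path_to_target mv x (min_jump_prob R0) (k + list_sum x) y.
Proof.
  revert y; induction k as [|k IH]; intros y Hx Hy Hsum HR0.
  - apply path_up; auto; [apply Forall2_le_of_sum_0; congruence|lia].
  - destruct (list_sum_pos_nth y ltac:(lia)) as [j [Hj Hpos]].
    simpl. apply path_jump with (upd Nat.pred j y) (death_rate C L N0 leps n j y).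
    + apply moves_death; lia.
    + apply min_jump_prob_le. eapply Rle_trans; [apply Rmin_r|].
      apply death_rate_ge_low_total; auto; lia.
    + pose proof (list_sum_upd_pred j y Hpos).
      apply IH; auto; [now rewrite length_upd|lia|lia].
Qed.

Lemma moves_irreducible : irreducible mv n.
Proof.
  intros y x Hy Hx.
  apply (reach_of_path mv moves_qtot_pos x (min_jump_prob (list_sum y)) (list_sum y + list_sum x)).
  - apply min_jump_prob_bounds.
  - apply path_down; auto.
Qed.

Lemma survival_low_total x R0 y : length x = n -> length y = n -> (list_sum y <= R0)%nat ->
  survival mv x (S (R0 + list_sum x)) y <= 1 - min_jump_prob R0 ^ (R0 + list_sum x).
Proof.
  intros Hx Hy HR0. pose proof (min_jump_prob_bounds R0) as Hd.
  eapply Rle_trans.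
  - apply (survival_le_of_path mv moves_rate_nonneg moves_qtot_pos x (min_jump_prob R0)
             (list_sum y + list_sum x)); [lra|now apply path_down|lia].
  - replace (R0 + list_sum x)%nat with ((list_sum y + list_sum x) + (R0 - list_sum y))%nat by lia.
    rewrite (pow_add _ (list_sum y + list_sum x) (R0 - list_sum y)).
    assert (0 <= min_jump_prob R0 ^ (list_sum y + list_sum x)) by (apply pow_le; lra).
    assert (min_jump_prob R0 ^ (R0 - list_sum y) <= 1)
      by (rewrite <- (pow1 (R0 - list_sum y)); apply pow_incr; lra).
    nra.
Qed.

Lemma moves_positive_recurrent : b * S0 < c -> positive_recurrent mv n.
Proof.
  intros Hst x Hx.
  destruct (INR_unbounded ((K0 + Qmax) / (2 * (c - b * S0)))) as [R0 HR0].
  assert (HR0' : K0 + Qmax < 2 * (c - b * S0) * INR R0).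
  { apply Rmult_lt_reg_r with (/ (2 * (c - b * S0))); [apply Rinv_0_lt_compat; lra|].
    replace (2 * (c - b * S0) * INR R0 * / (2 * (c - b * S0))) with (INR R0) by (field; lra).
    exact HR0. }
  pose proof b_pos. pose proof (min_jump_prob_bounds R0).
  apply (positive_recurrent_at_of_drift mv moves_rate_nonneg moves_qtot_pos x
           (fun s => length s = n) moves_length energy (fun y => Nat.leb (list_sum y) R0)
           (K0 / b) (min_jump_prob R0 ^ (R0 + list_sum x)) b (S (R0 + list_sum x))).
  - exact b_pos.
  - exact qtot_ge_b.
  - exact Hx.
  - unfold K0. pose proof c_pos. pose proof dmax_nonneg. pose proof (pos_INR n).
    apply Rle_mult_inv_pos; [apply Rmult_le_pos; nra|lra].
  - apply pow_lt; lra.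
  - intros; apply energy_nonneg.
  - intros y Hy HF. apply Nat.leb_gt in HF. now apply (energy_drift_far R0).
  - intros y Hy _. now apply energy_drift_near.
  - intros y Hy HF. apply Nat.leb_le in HF. now apply survival_low_total.
Qed.

Theorem moves_ergodic :
  lam < C / (L * ln 2 * eps ^ 2 * rsum (fun k => leps k O) n) -> ergodic mv n.
Proof.
  intros Hst. split; [exact moves_irreducible|apply moves_positive_recurrent].
  assert (HS0 : 1 <= S0).
  { unfold S0. rewrite <- (leps_row_sum O) by lia.
    rewrite <- (leps_diag O) at 1 by lia. rewrite <- (rsum_indicator_mul O (leps O) n) by lia.
    apply rsum_le. intros j Hj. pose proof (leps_range O j ltac:(lia) Hj).
    destruct (Nat.eqb j O); lra. }
  pose proof ln2_pos. assert (0 < eps ^ 2) by (apply pow_lt; lra).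
  assert (Hpos : 0 < L * ln 2 * eps ^ 2 * S0) by (repeat apply Rmult_lt_0_compat; lra).
  fold S0 in Hst. unfold b, c.
  apply Rmult_lt_compat_r with (r := L * ln 2 * eps ^ 2 * S0) in Hst; [|exact Hpos].
  replace (C / (L * ln 2 * eps ^ 2 * S0) * (L * ln 2 * eps ^ 2 * S0)) with C in Hst
    by (field; repeat split; lra).
  apply Rmult_lt_reg_r with (L * ln 2); [nra|].
  replace (C / (L * ln 2) * (L * ln 2)) with C by (field; lra). lra.
Qed.

End SINRChain.

Lemma Int_part_plus_IZR x k : Int_part (x + IZR k) = (Int_part x + k)%Z.
Proof.
  symmetry. apply Int_part_spec. destruct (base_Int_part x) as [H1 H2].
  rewrite plus_IZR. lra.
Qed.

Lemma circ_dist_periodic Q t k : 0 < Q -> circ_dist Q (t + 2 * Q * IZR k) = circ_dist Q t.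
Proof.
  intros HQ. unfold circ_dist.
  replace ((t + 2 * Q * IZR k) / (2 * Q)) with (t / (2 * Q) + IZR k) by (field; lra).
  rewrite Int_part_plus_IZR, plus_IZR.
  replace (t / (2 * Q) + IZR k - (IZR (Int_part (t / (2 * Q))) + IZR k))
    with (t / (2 * Q) - IZR (Int_part (t / (2 * Q)))) by ring.
  reflexivity.
Qed.

(* Negation maps the fractional part [r] to [1 - r] (or keeps [0]), and [Rmin r (1 - r)] is symmetric. *)
Lemma circ_dist_opp Q t : 0 < Q -> circ_dist Q (- t) = circ_dist Q t.
Proof.
  intros HQ. unfold circ_dist.
  replace (- t / (2 * Q)) with (- (t / (2 * Q))) by (field; lra).
  set (x := t / (2 * Q)). destruct (base_Int_part x) as [H1 H2].
  set (z := Int_part x) in *.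
  destruct (Req_dec (IZR z) x) as [Heq|Hne].
  - assert (Hz : Int_part (- x) = (- z)%Z) by (symmetry; apply Int_part_spec; rewrite opp_IZR; lra).
    rewrite Hz, opp_IZR. replace (- x - - IZR z) with 0 by lra. replace (x - IZR z) with 0 by lra.
    reflexivity.
  - assert (Hz : Int_part (- x) = (- z - 1)%Z)
      by (symmetry; apply Int_part_spec; rewrite minus_IZR, opp_IZR; simpl; lra).
    rewrite Hz, minus_IZR, opp_IZR. simpl IZR.
    replace (- x - (- IZR z - 1)) with (1 - (x - IZR z)) by ring.
    replace (1 - (1 - (x - IZR z))) with (x - IZR z) by ring.
    now rewrite Rmin_comm.
Qed.

Lemma circ_dist_0 Q : circ_dist Q 0 = 0.
Proof.
  unfold circ_dist. replace (0 / (2 * Q)) with 0 by (unfold Rdiv; ring).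
  assert (Hz : Int_part 0 = 0%Z) by (symmetry; apply Int_part_spec; simpl; lra).
  rewrite Hz. simpl. replace (0 - 0) with 0 by ring. rewrite Rmin_left by lra. ring.
Qed.

Lemma torus_dist_sym Q p p' : 0 < Q -> torus_dist Q p p' = torus_dist Q p' p.
Proof.
  intros HQ. unfold torus_dist.
  replace (fst p' - fst p) with (- (fst p - fst p')) by ring.
  replace (snd p' - snd p) with (- (snd p - snd p')) by ring.
  rewrite !circ_dist_opp by auto. reflexivity.
Qed.

Lemma torus_dist_diag Q p : torus_dist Q p p = 0.
Proof.
  unfold torus_dist. rewrite !Rminus_diag, circ_dist_0.
  replace (0 ^ 2 + 0 ^ 2) with 0 by ring. apply sqrt_0.
Qed.

Lemma center_in_closed_cell eps m i : 0 < eps -> in_closed_cell eps m i (center eps m i).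
Proof.
  intros He. exists 0, 0. rewrite Rabs_R0. repeat split; try lra.
  destruct (center eps m i); simpl. f_equal; ring.
Qed.

Lemma is_lub_iff (E E' : R -> Prop) a : (forall r, E r <-> E' r) -> is_lub E a -> is_lub E' a.
Proof.
  intros H [Hub Hleast]. split.
  - intros r Hr. apply Hub, H, Hr.
  - intros u Hu. apply Hleast. intros r Hr. apply Hu, H, Hr.
Qed.

Definition sub_mod (m a p : nat) : nat := if Nat.leb p a then (a - p)%nat else (a + m - p)%nat.

Lemma sub_mod_lt m a p : (a < m)%nat -> (p < m)%nat -> (sub_mod m a p < m)%nat.
Proof. intros. unfold sub_mod. destruct (Nat.leb_spec p a); lia. Qed.

Lemma sub_mod_involutive m a p : (a < m)%nat -> (p < m)%nat -> sub_mod m a (sub_mod m a p) = p.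
Proof.
  intros. unfold sub_mod.
  destruct (Nat.leb_spec p a); [destruct (Nat.leb_spec (a - p) a)|destruct (Nat.leb_spec (a + m - p) a)]; lia.
Qed.

Lemma sub_mod_real m a p (eps Q : R) : INR m * eps = 2 * Q -> (a < m)%nat -> (p < m)%nat ->
  exists z, INR a * eps - INR p * eps = INR (sub_mod m a p) * eps + 2 * Q * IZR z.
Proof.
  intros Hm Ha Hp. unfold sub_mod. destruct (Nat.leb_spec p a).
  - exists 0%Z. rewrite minus_INR by lia. simpl. lra.
  - exists (-1)%Z. rewrite minus_INR, plus_INR by lia. simpl IZR. rewrite <- Hm. lra.
Qed.

(* The cell whose center is [a_i - a_j] on the torus. *)
Definition cell_diff (m i j : nat) : nat :=
  (sub_mod m (i / m) (j / m) * m + sub_mod m (i mod m) (j mod m))%nat.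

Lemma div_mod_lt m i : (i < m * m)%nat -> (i / m < m)%nat /\ (i mod m < m)%nat.
Proof.
  intros H. assert (m <> 0%nat) by (intro; subst; lia). split.
  - apply Nat.Div0.div_lt_upper_bound. lia.
  - apply Nat.mod_upper_bound; auto.
Qed.

Lemma cell_diff_spec m i j : (i < m * m)%nat -> (j < m * m)%nat ->
  (cell_diff m i j < m * m)%nat /\
  (cell_diff m i j / m = sub_mod m (i / m) (j / m))%nat /\
  (cell_diff m i j mod m = sub_mod m (i mod m) (j mod m))%nat.
Proof.
  intros Hi Hj. destruct (div_mod_lt m i Hi), (div_mod_lt m j Hj).
  pose proof (sub_mod_lt m _ _ H H1). pose proof (sub_mod_lt m _ _ H0 H2).
  unfold cell_diff. split; [nia|split].
  - symmetry. apply Nat.div_unique with (sub_mod m (i mod m) (j mod m)); auto. lia.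
  - symmetry. apply Nat.mod_unique with (sub_mod m (i / m) (j / m)); auto. lia.
Qed.

Lemma cell_diff_inj m i j j' : (i < m * m)%nat -> (j < m * m)%nat -> (j' < m * m)%nat ->
  cell_diff m i j = cell_diff m i j' -> j = j'.
Proof.
  intros Hi Hj Hj' E.
  destruct (cell_diff_spec m i j Hi Hj) as [_ [A1 A2]].
  destruct (cell_diff_spec m i j' Hi Hj') as [_ [B1 B2]].
  destruct (div_mod_lt m i Hi), (div_mod_lt m j Hj), (div_mod_lt m j' Hj').
  rewrite E in A1, A2. rewrite A1 in B1. rewrite A2 in B2.
  assert (j / m = j' / m)%nat
    by (rewrite <- (sub_mod_involutive m (i / m) (j / m)), B1, sub_mod_involutive; auto).
  assert (j mod m = j' mod m)%nat
    by (rewrite <- (sub_mod_involutive m (i mod m) (j mod m)), B2, sub_mod_involutive; auto).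
  assert (m <> 0%nat) by (intro; subst; lia).
  rewrite (Nat.div_mod j m), (Nat.div_mod j' m) by auto. lia.
Qed.

Lemma rsum_cell_diff m i (h : nat -> R) : (i < m * m)%nat ->
  rsum (fun j => h (cell_diff m i j)) (m * m) = rsum h (m * m).
Proof.
  intros Hi. apply rsum_permute.
  - intros j j' Hj Hj'. now apply cell_diff_inj.
  - intros j Hj. now apply cell_diff_spec.
Qed.

Lemma center_cell_diff eps Q m i j : INR m * eps = 2 * Q -> (i < m * m)%nat -> (j < m * m)%nat ->
  exists z1 z2,
    fst (center eps m i) - fst (center eps m j) =
      fst (center eps m (cell_diff m i j)) - fst (center eps m O) + 2 * Q * IZR z1 /\
    snd (center eps m i) - snd (center eps m j) =
      snd (center eps m (cell_diff m i j)) - snd (center eps m O) + 2 * Q * IZR z2.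
Proof.
  intros Hm Hi Hj.
  destruct (cell_diff_spec m i j Hi Hj) as [_ [Hdiv Hmod]].
  destruct (div_mod_lt m i Hi), (div_mod_lt m j Hj).
  destruct (sub_mod_real m (i / m) (j / m) eps Q Hm) as [z1 Hz1]; auto.
  destruct (sub_mod_real m (i mod m) (j mod m) eps Q Hm) as [z2 Hz2]; auto.
  exists z1, z2. unfold center; simpl.
  rewrite Hdiv, Hmod, Nat.Div0.div_0_l, Nat.Div0.mod_0_l. simpl. lra.
Qed.

Lemma leps_set_translate l Q eps m i j k k' z1 z2 r : 0 < Q ->
  fst (center eps m i) - fst (center eps m j) = fst (center eps m k) - fst (center eps m k') + 2 * Q * IZR z1 ->
  snd (center eps m i) - snd (center eps m j) = snd (center eps m k) - snd (center eps m k') + 2 * Q * IZR z2 ->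
  leps_set l Q eps m i j r -> leps_set l Q eps m k k' r.
Proof.
  intros HQ E1 E2 [p [p' [[u [v [Hu [Hv ->]]]] [[u' [v' [Hu' [Hv' ->]]]] ->]]]].
  exists (fst (center eps m k) + u, snd (center eps m k) + v),
         (fst (center eps m k') + u', snd (center eps m k') + v').
  split; [exists u, v; auto|]. split; [exists u', v'; auto|].
  f_equal. unfold torus_dist. cbn [fst snd].
  replace (fst (center eps m i) + u - (fst (center eps m j) + u'))
    with (fst (center eps m k) + u - (fst (center eps m k') + u') + 2 * Q * IZR z1) by lra.
  replace (snd (center eps m i) + v - (snd (center eps m j) + v'))
    with (snd (center eps m k) + v - (snd (center eps m k') + v') + 2 * Q * IZR z2) by lra.
  now rewrite !circ_dist_periodic.
Qed.

Section TorusKernel.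

Variables (Q eps : R) (m : nat) (l : R -> R) (leps : nat -> nat -> R).
Hypotheses (HQ : 0 < Q) (Heps : 0 < eps) (Hm : INR m * eps = 2 * Q)
  (Hl_nonneg : forall r, 0 <= r -> 0 <= l r)
  (Hl_noninc : forall r r', 0 <= r -> r <= r' -> l r' <= l r)
  (Hl0 : l 0 = 1)
  (Hleps : forall i j, (i < m * m)%nat -> (j < m * m)%nat -> is_lub (leps_set l Q eps m i j) (leps i j)).

Lemma torus_leps_range i j : (i < m * m)%nat -> (j < m * m)%nat -> 0 <= leps i j <= 1.
Proof.
  intros Hi Hj. destruct (Hleps i j Hi Hj) as [Hub Hleast]. split.
  - apply Rle_trans with (l (torus_dist Q (center eps m i) (center eps m j))).
    + apply Hl_nonneg, sqrt_pos.
    + apply Hub. exists (center eps m i), (center eps m j).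
      repeat split; try apply center_in_closed_cell; auto.
  - apply Hleast. intros r [p [p' [_ [_ ->]]]]. rewrite <- Hl0. apply Hl_noninc; [lra|apply sqrt_pos].
Qed.

Lemma torus_leps_diag i : (i < m * m)%nat -> leps i i = 1.
Proof.
  intros Hi. apply Rle_antisym; [now apply torus_leps_range|].
  destruct (Hleps i i Hi Hi) as [Hub _].
  rewrite <- Hl0, <- (torus_dist_diag Q (center eps m i)).
  apply Hub. exists (center eps m i), (center eps m i).
  repeat split; try apply center_in_closed_cell; auto.
Qed.

Lemma torus_leps_sym i j : (i < m * m)%nat -> (j < m * m)%nat -> leps i j = leps j i.
Proof.
  intros Hi Hj. apply (is_lub_u (leps_set l Q eps m j i)); [|auto].
  apply (is_lub_iff (leps_set l Q eps m i j)); [|auto].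
  intros r; split; intros [p [p' [H1 [H2 ->]]]]; exists p', p; repeat split; auto;
    now rewrite torus_dist_sym.
Qed.

Lemma torus_leps_translate i j k k' z1 z2 :
  (i < m * m)%nat -> (j < m * m)%nat -> (k < m * m)%nat -> (k' < m * m)%nat ->
  fst (center eps m i) - fst (center eps m j) = fst (center eps m k) - fst (center eps m k') + 2 * Q * IZR z1 ->
  snd (center eps m i) - snd (center eps m j) = snd (center eps m k) - snd (center eps m k') + 2 * Q * IZR z2 ->
  leps i j = leps k k'.
Proof.
  intros Hi Hj Hk Hk' E1 E2. apply (is_lub_u (leps_set l Q eps m k k')); [|auto].
  apply (is_lub_iff (leps_set l Q eps m i j)); [|auto].
  intros r; split.
  - now apply (leps_set_translate l Q eps m i j k k' z1 z2).
  - apply (leps_set_translate l Q eps m k k' i j (- z1) (- z2)); auto; rewrite opp_IZR; lra.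
Qed.

Lemma torus_leps_row_sum i : (i < m * m)%nat ->
  rsum (leps i) (m * m) = rsum (fun k => leps k O) (m * m).
Proof.
  intros Hi. rewrite <- (rsum_cell_diff m i (fun k => leps k O) Hi). apply rsum_ext. intros j Hj.
  assert (Hm0 : (0 < m * m)%nat) by lia.
  destruct (center_cell_diff eps Q m i j Hm Hi Hj) as [z1 [z2 [E1 E2]]].
  apply (torus_leps_translate i j _ O z1 z2); auto. now apply cell_diff_spec.
Qed.

End TorusKernel.

Theorem mainTheorem9
  (Q eps : R) (m : nat) (l : R -> R) (N0 C L lam : R) (le : nat -> nat -> R)
  (HQ : 0 < Q) (Heps : 0 < eps) (Hm : INR m * eps = 2 * Q)
  (Hl_nonneg : forall r, 0 <= r -> 0 <= l r)
  (Hl_bdd : exists B, forall r, 0 <= r -> l r <= B)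
  (Hl_noninc : forall r r', 0 <= r -> r <= r' -> l r' <= l r)
  (Hl0 : l 0 = 1)
  (HN0 : 0 < N0) (HC : 0 < C) (HL : 0 < L) (Hlam : 0 < lam)
  (Hle : forall i j, (i < m * m)%nat -> (j < m * m)%nat ->
           is_lub (leps_set l Q eps m i j) (le i j))
  (Hstab : lam < C / (L * ln 2 * eps ^ 2 * rsum (fun k => le k O) (m * m))) :
  ergodic (moves lam eps C L N0 le (m * m)) (m * m).
Proof.
  assert (Hm1 : (1 <= m * m)%nat) by (destruct m; [simpl in Hm; lra|nia]).
  apply moves_ergodic; auto.
  - now apply (torus_leps_range Q eps m l).
  - now apply (torus_leps_diag Q eps m l).
  - now apply (torus_leps_sym Q eps m l).
  - now apply (torus_leps_row_sum Q eps m l).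
Qed.
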